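(* Let $v \ge 147$ be an integer. Then $\beta(3,v,4) \le v-2$, and \[ \beta(3,v,4) \ge \begin{cases} v-3 & \text{if } v \equiv 0 \text{ or } 1 \pmod 3,\\ v-5 & \text{if } v \equiv 2 \pmod 3. \end{cases} \]
   Context: For integers $v \ge k \ge 2$, a $(v,k)$-packing is a pair $(X,\mathcal{B})$ where $X$ is a set of $v$ points and $\mathcal{B}$ is a set of $k$-subsets of $X$ (blocks) such that every pair of distinct points lies in at most one block. A partial parallel class (PPC) is a set of pairwise disjoint blocks; its size is the number of blocks. A PPC of size $\rho$ is maximum if the packing has no PPC of size $\rho+1$. $\beta(\rho,v,k)$ denotes the maximum number of blocks in a $(v,k)$-packing in which the maximum PPC has size $\rho$. *)

From mathcomp Require Import all_boot.
Set Implicit Arguments. Unset Strict Implicit. Unset Printing Implicit Defensive.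

Definition is_packing (v k : nat) (B : {set {set 'I_v}}) : bool :=
  [forall b in B, #|b| == k] &&
  [forall x : 'I_v, forall y : 'I_v,
     (x != y) ==> (#|[set b in B | (x \in b) && (y \in b)]| <= 1)].

Definition is_ppc (v : nat) (B P : {set {set 'I_v}}) : bool :=
  (P \subset B) &&
  [forall b1 in P, forall b2 in P, (b1 != b2) ==> [disjoint b1 & b2]].

Definition max_ppc_size (v : nat) (B : {set {set 'I_v}}) (rho : nat) : bool :=
  [exists P : {set {set 'I_v}}, is_ppc B P && (#|P| == rho)] &&
  ~~ [exists P : {set {set 'I_v}}, is_ppc B P && (#|P| == rho.+1)].

Definition beta (rho v k : nat) : nat :=
  \max_(B : {set {set 'I_v}} | is_packing k B && max_ppc_size B rho) #|B|.

From mathcomp Require Import all_boot ssralg zmodp zify.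
Set Implicit Arguments. Unset Strict Implicit. Unset Printing Implicit Defensive.
Import GRing.Theory.

(* Upper bound: call a point heavy if it lies on more than 12 blocks.  A heavy
   point still has a block avoiding any 12 given points, so heavy points and a
   partial parallel class disjoint from them can be greedily merged into a
   larger class; hence there are h <= 3 heavy points and the blocks missing
   them have a parallel class of size at most 3 - h.  A maximal such class
   covers at most 4 (3 - h) light points, which meet all blocks missing the
   heavy points, so there are at most 48 (3 - h) of those.  The blocks through
   a point x are disjoint outside x, so there are at most (v - 1) / 3 of them;
   if no block contains two heavy points this drops to (v - h) / 3, and
   otherwise the union over the heavy points double-counts a block.  For
   v >= 147 the total is at most v - 2.
   Lower bound: write v = off + 3m with 3 <= off <= 5.  Take points 0, 1, 2
   and three groups Z_m; for each slope s in {0, 1, 2} and c in Z_m, the block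
   {s, c, c + s, c + 2s} has one point in each group.  Any two of c, c + s,
   c + 2s determine c and s, so two blocks share at most one point; each block
   contains one of 0, 1, 2, so no parallel class has more than 3 blocks.  If
   off >= 4 the block {0, 1, 2, 3} can be added. *)

Lemma card_bigcup_le (T I : finType) (P : pred I) (F : I -> {set T}) :
  #|\bigcup_(i | P i) F i| <= \sum_(i | P i) #|F i|.
Proof.
elim/big_rec2: _ => [|i U n _ IH]; first by rewrite cards0.
by rewrite (leq_trans (leq_card_setU _ _).1) // leq_add2l.
Qed.

Lemma card_bigcup_lt (T I : finType) (P : pred I) (F : I -> {set T}) i j x :
  P i -> P j -> i != j -> x \in F i -> x \in F j ->
  #|\bigcup_(i | P i) F i| < \sum_(i | P i) #|F i|.
Proof.
move=> Pi Pj ij xi xj; rewrite (bigD1 i Pi) [X in _ < X](bigD1 i Pi) /=.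
set R := \bigcup_(k | _) F k.
have xR : x \in F i :&: R by rewrite inE xi; apply/bigcupP; exists j; rewrite // Pj eq_sym.
have leR : #|R| <= \sum_(k | P k && (k != i)) #|F k| := card_bigcup_le _ _.
have /card_gt0P : exists y, y \in F i :&: R by exists x.
have := cardsUI (F i) R; lia.
Qed.

Lemma exists_subset_card (T : finType) (A : {set T}) n :
  n <= #|A| -> exists2 A' : {set T}, A' \subset A & #|A'| = n.
Proof.
case/card_geqP=> s [us <- sA]; exists [set x in s]; last by rewrite cardsE (card_uniqP us).
by apply/subsetP => x; rewrite inE => /sA.
Qed.

Section PackingBasics.
Variable v : nat.
Implicit Types (B P : {set {set 'I_v}}) (b : {set 'I_v}).

Lemma packingP k B :
  reflect ((forall b, b \in B -> #|b| = k) /\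
           (forall b1 b2 x y, b1 \in B -> b2 \in B -> x != y ->
              x \in b1 -> y \in b1 -> x \in b2 -> y \in b2 -> b1 = b2))
          (is_packing k B).
Proof.
apply: (iffP andP) => [[/forallP cB /forallP pB]|[cB pB]]; split.
- by move=> b bB; apply/eqP; move/implyP: (cB b); apply.
- move=> b1 b2 x y h1 h2 xy x1 y1 x2 y2.
  move: (pB x) => /forallP/(_ y)/implyP/(_ xy)/card_le1_eqP.
  by apply; rewrite inE ?h1 ?h2 ?x1 ?x2 ?y1 ?y2.
- by apply/forallP => b; apply/implyP => bB; rewrite cB.
- apply/forallP => x; apply/forallP => y; apply/implyP => xy.
  apply/card_le1_eqP => b1 b2; rewrite !inE => /and3P[h1 x1 y1] /and3P[h2 x2 y2].
  exact: pB _ _ _ _ h2 h1 xy x2 y2 x1 y1.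
Qed.

Lemma ppcP B P :
  reflect (P \subset B /\ {in P &, forall b1 b2, b1 != b2 -> [disjoint b1 & b2]})
          (is_ppc B P).
Proof.
apply: (iffP andP) => [[sPB /forallP dP]|[sPB dP]]; split=> //.
  move=> b1 b2 h1 h2; move: (dP b1); rewrite h1 /= => /forallP/(_ b2).
  by rewrite h2 /= => /implyP.
apply/forallP => b1; apply/implyP => h1; apply/forallP => b2; apply/implyP => h2.
by apply/implyP; apply: dP.
Qed.

Lemma ppc_set0 B : is_ppc B set0.
Proof. by apply/ppcP; split=> [|b1 b2]; rewrite ?sub0set ?inE. Qed.

Lemma ppc_subset B P P' : P' \subset P -> is_ppc B P -> is_ppc B P'.
Proof.
move=> sP' /ppcP[sPB dP]; apply/ppcP; split; first exact: subset_trans sPB.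
by move=> b1 b2 h1 h2; apply: dP; apply: (subsetP sP').
Qed.

Lemma ppc_widen B B' P : B \subset B' -> is_ppc B P -> is_ppc B' P.
Proof. by move=> sB /ppcP[sPB dP]; apply/ppcP; split; first exact: subset_trans sB. Qed.

Lemma ppc_setU1 B P b :
  is_ppc B P -> b \in B -> b != set0 -> [disjoint b & cover P] ->
  is_ppc B (b |: P) /\ #|b |: P| = #|P|.+1.
Proof.
move=> /ppcP[sPB dP] bB /set0Pn[x xb] dbP.
have dbc c : c \in P -> [disjoint b & c].
  by move=> cP; apply: disjointWr dbP; apply: bigcup_sup.
have bP : b \notin P by apply/negP => /dbc /disjointFr/(_ xb); rewrite xb.
split; last by rewrite cardsU1 bP.
apply/ppcP; split; first by rewrite subUset sub1set bB.
move=> b1 b2 /setU1P[->|h1] /setU1P[->|h2]; rewrite ?eqxx // => ne.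
- exact: dbc.
- by rewrite disjoint_sym; apply: dbc.
- exact: dP.
Qed.

Lemma max_ppc_sizeP B rho :
  reflect ((exists2 P, is_ppc B P & #|P| = rho) /\
           (forall P, is_ppc B P -> #|P| <= rho))
          (max_ppc_size B rho).
Proof.
apply: (iffP andP) => [[/existsP[P /andP[pP /eqP cP]] /existsPn noP]|[[P pP cP] le_rho]].
  split=> [|Q pQ]; first by exists P.
  rewrite leqNgt; apply/negP => /exists_subset_card[Q' sQ' cQ'].
  by move: (noP Q'); rewrite (ppc_subset sQ' pQ) cQ' eqxx.
split; first by apply/existsP; exists P; rewrite pP cP eqxx.
apply/existsPn => Q; apply/negP => /andP[pQ /eqP cQ].
by have := le_rho Q pQ; rewrite cQ ltnn.
Qed.

Lemma card_ppc_le_transversal B P (A : {set 'I_v}) :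
  (forall b, b \in B -> ~~ [disjoint b & A]) -> is_ppc B P -> #|P| <= #|A|.
Proof.
move=> hitA /ppcP[sPB dP].
pose f b := [pick x in b :&: A].
have fP b : b \in P -> exists2 x, f b = Some x & x \in b :&: A.
  move=> bP; rewrite /f; case: pickP => [x|none]; first by exists x.
  have /set0Pn[x] : b :&: A != set0 by rewrite setI_eq0 hitA ?(subsetP sPB).
  by rewrite none.
have f_inj : {in P &, injective f}.
  move=> b1 b2 h1 h2; have [x -> /setIP[xb1 _]] := fP b1 h1.
  have [y -> /setIP[yb2 _]] := fP b2 h2; case=> exy; subst y.
  apply/eqP; apply: contraTT yb2 => ne.
  by rewrite (disjointFr (dP _ _ h1 h2 ne) xb1).
rewrite -(card_in_imset f_inj) -(card_imset A (@Some_inj _)).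
apply: subset_leq_card; apply/subsetP => _ /imsetP[b bP ->].
by have [x -> /setIP[_ xA]] := fP b bP; apply: imset_f.
Qed.

End PackingBasics.

Lemma leq_card_beta rho v k (B : {set {set 'I_v}}) :
  is_packing k B -> max_ppc_size B rho -> #|B| <= beta rho v k.
Proof. by move=> pB mB; apply: leq_bigmax_cond; rewrite pB mB. Qed.

Section PackingUpperBound.
Variables (v k rho : nat) (B : {set {set 'I_v}}).
Hypothesis k_gt0 : 0 < k.
Hypothesis B_packing : is_packing k B.
Hypothesis B_ppc : forall P, is_ppc B P -> #|P| <= rho.

Definition blocks_at (x : 'I_v) := [set b in B | x \in b].
Definition deg x := #|blocks_at x|.
Definition heavy := [set x | k * rho < deg x].
Definition heavy_blocks := \bigcup_(x in heavy) blocks_at x.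
Definition light_blocks := [set b in B | [disjoint b & heavy]].

Lemma card_block b : b \in B -> #|b| = k.
Proof. by case/packingP: B_packing => cB _; apply: cB. Qed.

Lemma block_pair_uniq b1 b2 x y : b1 \in B -> b2 \in B -> x != y ->
  x \in b1 -> y \in b1 -> x \in b2 -> y \in b2 -> b1 = b2.
Proof. by case/packingP: B_packing => _; apply. Qed.

Lemma card_cover_ppc P : is_ppc B P -> #|cover P| = k * #|P|.
Proof.
move=> /ppcP[sPB dP]; have /trivIsetP/eqP <- := dP.
rewrite (eq_bigr (fun _ => k)) => [|b bP]; first by rewrite sum_nat_const mulnC.
exact/card_block/(subsetP sPB).
Qed.

(* The blocks through x, with x removed, are pairwise disjoint (k-1)-sets
   avoiding x and S. *)
Lemma deg_avoid_bound x (S : {set 'I_v}) :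
  x \notin S -> (forall b, b \in blocks_at x -> [disjoint b & S]) ->
  k.-1 * deg x + #|S| < v.
Proof.
move=> xS dS; set Q := [set b :\ x | b in blocks_at x].
have Q_inj : {in blocks_at x &, injective (fun b => b :\ x)}.
  move=> b1 b2; rewrite !inE => /andP[_ x1] /andP[_ x2] e.
  by rewrite -(setD1K x1) -(setD1K x2) e.
have tQ : trivIset Q.
  apply/trivIsetP => _ _ /imsetP[b1 h1 ->] /imsetP[b2 h2 ->] ne.
  rewrite -setI_eq0; apply/eqP/setP => y; rewrite !inE.
  apply/negP => /andP[/andP[yx y1] /andP[_ y2]]; move: h1 h2 ne; rewrite !inE.
  move=> /andP[B1 x1] /andP[B2 x2].
  by rewrite (block_pair_uniq B1 B2 _ x1 y1 x2 y2) ?eqxx // eq_sym.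
have cQ : \sum_(q in Q) #|q| = k.-1 * deg x.
  rewrite big_imset //= (eq_bigr (fun _ => k.-1)) => [|b]; first by rewrite sum_nat_const mulnC.
  by rewrite inE => /andP[bB xb]; have := cardsD1 x b; rewrite xb card_block // add1n => ->.
have sQ : cover Q \subset ~: (x |: S).
  apply/bigcupsP => _ /imsetP[b bx ->]; apply/subsetP => y; rewrite !inE.
  case/andP=> yx yb; rewrite negb_or yx /=.
  by apply/negP => yS; have := disjointFr (dS b bx) yb; rewrite yS.
have := subset_leq_card sQ; rewrite -(eqP tQ) cQ.
have := cardsC (x |: S); rewrite cardsU1 xS card_ord.
lia.
Qed.

Lemma deg_lt x : k.-1 * deg x < v.
Proof.
have := @deg_avoid_bound x set0; rewrite cards0 addn0 inE; apply=> // b _.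
by rewrite disjoints_subset setC0 subsetT.
Qed.

Lemma deg_le_isolated x : x \in heavy ->
  (forall b, b \in blocks_at x -> [disjoint b & heavy :\ x]) ->
  k.-1 * deg x <= v - #|heavy|.
Proof.
move=> xh /(deg_avoid_bound (negbT (setD11 x heavy))).
rewrite [#|heavy|](cardsD1 x) xh add1n => lt_v.
by rewrite leq_subRL ?(leq_ltn_trans (leq_addl _ _) lt_v) // addSn addnC.
Qed.

Lemma exists_block_avoid x (S : {set 'I_v}) : #|S| < deg x -> x \notin S ->
  exists2 b, b \in blocks_at x & [disjoint b & S].
Proof.
move=> ltS xS; apply/exists_inP; apply: contraTT ltS => /exists_inPn noB.
rewrite -leqNgt.
pose f b := odflt x [pick y in b :&: S].
have fP b : b \in blocks_at x -> f b \in b :&: S.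
  move=> bx; rewrite /f; case: pickP => [y //|none].
  have /set0Pn[y] : b :&: S != set0 by rewrite setI_eq0 noB.
  by rewrite none.
have f_inj : {in blocks_at x &, injective f}.
  move=> b1 b2 h1 h2 e; have := fP b1 h1; have := fP b2 h2.
  rewrite e !inE => /andP[y2 yS] /andP[y1 _]; move: h1 h2; rewrite !inE.
  move=> /andP[B1 x1] /andP[B2 x2]; apply: (block_pair_uniq B1 B2 _ x1 y1 x2 y2).
  by apply: contraNneq xS => ->.
rewrite /deg -(card_in_imset f_inj); apply: subset_leq_card.
by apply/subsetP => _ /imsetP[b bx ->]; have /setIP[] := fP b bx.
Qed.

(* Induction on T: a heavy point x of T has a block avoiding the at most
   k * rho points of cover P and T :\ x. *)
Lemma heavy_ppc_card_le P (T : {set 'I_v}) :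
  is_ppc B P -> T \subset heavy -> [disjoint T & cover P] -> #|P| + #|T| <= rho.
Proof.
elim: {T}_.+1 {-2}T (ltnSn #|T|) P => // n IH T ltT P pP sT dT.
case: (set_0Vmem T) => [->|[x xT]]; first by rewrite cards0 addn0 B_ppc.
set T' := T :\ x.
have cT : #|T| = #|T'|.+1 by rewrite (cardsD1 x T) xT.
have ltT' : #|T'| < n by rewrite -ltnS -cT.
have sT' : T' \subset heavy := subset_trans (subD1set T x) sT.
have le_rho : #|P| + #|T'| <= rho := IH T' ltT' P pP sT' (disjointWl (subD1set T x) dT).
have xS : x \notin cover P :|: T' by rewrite !inE eqxx (disjointFr dT xT).
have ltS : #|cover P :|: T'| < deg x.
  have heavy_x : k * rho < deg x by have := subsetP sT x xT; rewrite inE.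
  apply: leq_ltn_trans heavy_x; apply: leq_trans (leq_card_setU _ _).1 _.
  rewrite card_cover_ppc //; apply: leq_trans (_ : k * (#|P| + #|T'|) <= _).
    by rewrite mulnDr leq_add2l leq_pmull.
  by rewrite leq_mul2l le_rho orbT.
have [b] := exists_block_avoid ltS xS; rewrite inE => /andP[bB xb] db.
have [pbP cbP] : is_ppc B (b |: P) /\ #|b |: P| = #|P|.+1.
  apply: ppc_setU1 => //; first by apply/set0Pn; exists x.
  by apply: disjointWr db; apply: subsetUl.
rewrite cT -addSnnS -cbP; apply: IH ltT' _ pbP sT' _.
apply: bigcup_disjoint => c /setU1P[->|cP].
  by rewrite disjoint_sym; apply: disjointWr db; apply: subsetUr.
exact: disjointWr (bigcup_sup c cP) (disjointWl (subD1set T x) dT).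
Qed.

Lemma card_heavy_le : #|heavy| <= rho.
Proof.
have := @heavy_ppc_card_le set0 heavy (ppc_set0 B) (subxx _).
by rewrite cards0 /cover big_set0; apply; rewrite disjoints_subset setC0 subsetT.
Qed.

Lemma card_blocks_le : #|B| <= #|heavy_blocks| + #|light_blocks|.
Proof.
apply: leq_trans (leq_card_setU _ _).1; apply: subset_leq_card.
apply/subsetP => b bB; rewrite !inE bB /=.
case: (boolP [disjoint b & heavy]) => [dbH|]; first by apply/orP; right.
rewrite -setI_eq0 => /set0Pn[x /setIP[xb xh]].
by apply/orP; left; apply/bigcupP; exists x; rewrite // inE bB.
Qed.

(* A maximal partial parallel class among the light blocks meets every light
   block, and its points are light. *)
Lemma card_light_blocks_le : #|light_blocks| <= k * (rho - #|heavy|) * (k * rho).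
Proof.
have [P pPL maxP] := @arg_maxnP _ set0 (is_ppc light_blocks) (fun P => #|P|) (ppc_set0 _).
have sLB : light_blocks \subset B by apply/subsetP => b; rewrite inE => /andP[].
have pP := ppc_widen sLB pPL.
have dPH : [disjoint heavy & cover P].
  apply/bigcup_disjoint => b bP; case/ppcP: pPL => sPL _.
  by have := subsetP sPL b bP; rewrite inE disjoint_sym => /andP[].
have le_rho := heavy_ppc_card_le pP (subxx _) dPH.
have sL : light_blocks \subset \bigcup_(p in cover P) blocks_at p.
  apply/subsetP => b bL; have bB := subsetP sLB b bL.
  have : ~~ [disjoint b & cover P].
    apply/negP => db; have b0 : b != set0 by rewrite -card_gt0 card_block.
    have [pbP cbP] := ppc_setU1 pPL bL b0 db.
    by have := maxP _ pbP; rewrite /= cbP ltnn.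
  rewrite -setI_eq0 => /set0Pn[p /setIP[pb pP']].
  by apply/bigcupP; exists p; rewrite // inE bB.
apply: leq_trans (subset_leq_card sL) _; apply: leq_trans (card_bigcup_le _ _) _.
apply: leq_trans (_ : \sum_(p in cover P) k * rho <= _).
  apply: leq_sum => p pP'; rewrite leqNgt; apply/negP => hp.
  by have := disjointFl dPH pP'; rewrite inE hp.
have le_P : #|P| <= rho - #|heavy|.
  by rewrite leq_subRL ?(leq_trans (leq_addl _ _) le_rho) // addnC.
by rewrite sum_nat_const card_cover_ppc // leq_mul2r leq_mul2l le_P !orbT.
Qed.

Lemma card_heavy_blocks_le :
  k.-1 * #|heavy_blocks|.+1 <= #|heavy| * v.-1 \/
  k.-1 * #|heavy_blocks| <= #|heavy| * (v - #|heavy|).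
Proof.
have sum_deg c : (forall x : 'I_v, x \in heavy -> k.-1 * deg x <= c) ->
    k.-1 * \sum_(x in heavy) deg x <= #|heavy| * c.
  by move=> le_c; rewrite big_distrr -sum_nat_const; apply: leq_sum.
have le_sum := card_bigcup_le (mem heavy) blocks_at.
case: (boolP [exists x in heavy, exists y in heavy,
                (x != y) && ~~ [disjoint blocks_at x & blocks_at y]]).
  case/exists_inP => x xh /exists_inP[y yh /andP[xy]].
  rewrite -setI_eq0 => /set0Pn[b /setIP[bx by']].
  have lt_sum : k.-1 * #|heavy_blocks|.+1 <= k.-1 * \sum_(x in heavy) deg x.
    by rewrite leq_mul2l (card_bigcup_lt xh yh xy bx by') orbT.
  by left; apply: leq_trans lt_sum (sum_deg _ _) => z _; have := deg_lt z; lia.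
move=> /exists_inPn noshare; right.
have le_sum' : k.-1 * #|heavy_blocks| <= k.-1 * \sum_(x in heavy) deg x.
  by rewrite leq_mul2l le_sum orbT.
apply: leq_trans le_sum' (sum_deg _ _) => x xh; apply: deg_le_isolated => // b bx.
rewrite -setI_eq0; apply/eqP/setP => y.
rewrite in_setI in_setD1 in_set0; apply/negP => /and3P[yb yx yh].
have by' : b \in blocks_at y by move: bx; rewrite !inE yb => /andP[-> _].
move: (noshare x xh) => /exists_inPn/(_ y yh); rewrite eq_sym yx /= negbK.
by move/disjointFr/(_ bx); rewrite by'.
Qed.

End PackingUpperBound.

Lemma card_packing4_ppc3_le v (B : {set {set 'I_v}}) : 147 <= v -> is_packing 4 B ->
  (forall P, is_ppc B P -> #|P| <= 3) -> #|B| <= v - 2.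
Proof.
move=> le_v pB ppcB; have k_gt0 : 0 < 4 by [].
have := card_heavy_blocks_le 3 k_gt0 pB; have := card_blocks_le 4 3 B.
have := card_light_blocks_le k_gt0 pB ppcB; have := card_heavy_le k_gt0 pB ppcB.
move: #|heavy 4 3 B| #|heavy_blocks 4 3 B| #|light_blocks 4 3 B| => h bh bl.
by case: h => [|[|[|[|h]]]]; lia.
Qed.

Lemma line_coord2_inj (V : zmodType) (c d s t : V) (i j : nat) :
  i != j -> i <= 2 -> j <= 2 -> (s *+ 2 = t *+ 2 -> s = t)%R ->
  (c + s *+ i = d + t *+ i)%R -> (c + s *+ j = d + t *+ j)%R -> c = d /\ s = t.
Proof.
wlog lt_ij : i j / i < j.
  move=> wlog_ij ij le_i le_j inj2 ei ej.
  case: (ltngtP i j) => [lt|lt|eq]; last by rewrite eq eqxx in ij.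
    exact: wlog_ij i j lt ij le_i le_j inj2 ei ej.
  by apply: (wlog_ij j i lt _ le_j le_i inj2 ej ei); rewrite eq_sym.
move=> _ le_i le_j inj2; case: i j lt_ij le_i le_j => [|[|[|i]]] [|[|[|j]]] //= _ _ _.
- by rewrite !addr0 mulr1n => -> /addrI.
- by rewrite !addr0 => -> /addrI/inj2.
- rewrite !mulr1n !mulr2n !addrA => e1; rewrite e1 => /addrI st; split=> //.
  by move: e1; rewrite st => /addIr.
Qed.

Section CyclicConstruction.
Variables (k off v : nat).
Local Notation m := k.+1.
Hypothesis m_gt6 : 6 < m.
Hypothesis off_ge3 : 3 <= off.
Hypothesis v_eq : v = off + 3 * m.

Fact apex_subproof : 3 <= v.
Proof. by rewrite v_eq; apply: leq_trans (leq_addl off _); apply: leq_pmulr. Qed.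
Definition apex (s : 'I_3) : 'I_v := widen_ord apex_subproof s.

Fact group_point_subproof (j : 'I_3) (x : 'I_m) : off + j * m + x < v.
Proof.
rewrite v_eq -addnA ltn_add2l; apply: leq_trans (_ : j.+1 * m <= _).
  by rewrite mulSn addnC ltn_add2r.
by rewrite leq_mul2r ltn_ord orbT.
Qed.
Definition group_point (j : 'I_3) (x : 'I_m) : 'I_v := Ordinal (group_point_subproof j x).

Definition slope (s : 'I_3) : 'I_m := inZp s.
Definition line (c : 'I_m) (s : 'I_3) (j : 'I_3) : 'I_m := (c + slope s *+ j)%R.
Definition cyclic_block s c : {set 'I_v} :=
  apex s |: [set group_point j (line c s j) | j : 'I_3].
Definition cyclic_blocks := [set cyclic_block p.1 p.2 | p : 'I_3 * 'I_m].
Definition apexes := [set apex s | s : 'I_3].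

Lemma apex_inj : injective apex.
Proof. by move=> s t /(congr1 val) /= /ord_inj. Qed.

Lemma group_point_inj j j' x x' :
  group_point j x = group_point j' x' -> j = j' /\ x = x'.
Proof.
move/(congr1 val) => /= /eqP; rewrite -!addnA eqn_add2l => /eqP e.
split; apply: val_inj.
  by move: (congr1 (divn^~ m) e) => /=; rewrite !divnMDl // !divn_small ?addn0.
by move: (congr1 (modn^~ m) e) => /=; rewrite !modnMDl !modn_small.
Qed.

Lemma apex_neq_group_point s j x : apex s != group_point j x.
Proof. by apply/eqP => /(congr1 val) /=; have := ltn_ord s; lia. Qed.

Lemma card_apexes : #|apexes| = 3.
Proof. by rewrite card_imset ?card_ord //; apply: apex_inj. Qed.

Lemma cyclic_blockP y s c :
  reflect (y = apex s \/ exists j, y = group_point j (line c s j)) (y \in cyclic_block s c).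
Proof.
apply: (iffP setU1P) => [[->|/imsetP[j _ ->]]|[->|[j ->]]]; first (by left);
  by [right; exists j | left | right; apply: imset_f].
Qed.

Lemma apex_cyclic_block t s c : (apex t \in cyclic_block s c) = (t == s).
Proof.
apply/cyclic_blockP/eqP => [[/apex_inj //|[j /eqP]]|->]; last by left.
by rewrite (negPf (apex_neq_group_point _ _ _)).
Qed.

Lemma group_point_cyclic_block j x s c :
  (group_point j x \in cyclic_block s c) = (x == line c s j).
Proof.
apply/cyclic_blockP/eqP => [[/eqP|[i /group_point_inj[-> ->]]] //|->].
  by rewrite eq_sym (negPf (apex_neq_group_point _ _ _)).
by right; exists j.
Qed.

Lemma card_cyclic_block s c : #|cyclic_block s c| = 4.
Proof.
rewrite cardsU1 card_imset => [|i j /group_point_inj[] //].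
suff -> : apex s \notin [set group_point j (line c s j) | j : 'I_3] by rewrite card_ord.
by apply/imsetP => -[j _ /eqP]; rewrite (negPf (apex_neq_group_point _ _ _)).
Qed.

Lemma val_slope_mulrn s n : n <= 3 -> val (slope s *+ n)%R = s * n.
Proof.
move=> le_n; rewrite Zp_mulrn /=.
have lt_s : s < m by have := ltn_ord s; lia.
have lt_sn : s * n < m by have := ltn_ord s; nia.
by rewrite (modn_small lt_s) (modn_small lt_sn).
Qed.

Lemma slope_mulrn_inj s t n : 0 < n <= 3 -> (slope s *+ n = slope t *+ n)%R -> s = t.
Proof.
case/andP=> n_gt0 le_n /(congr1 val); rewrite !val_slope_mulrn // => /eqP.
by rewrite eqn_pmul2r // => /eqP /val_inj.
Qed.

Lemma cyclic_block_pair_uniq s t c d (x y : 'I_v) : x != y ->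
  x \in cyclic_block s c -> y \in cyclic_block s c ->
  x \in cyclic_block t d -> y \in cyclic_block t d -> s = t /\ c = d.
Proof.
have apex_case i : apex s \in cyclic_block t d ->
    group_point i (line c s i) \in cyclic_block t d -> s = t /\ c = d.
  rewrite apex_cyclic_block group_point_cyclic_block => /eqP st; subst t.
  by rewrite /line => /eqP /addIr.
move=> xy /cyclic_blockP[ex|[i ex]] /cyclic_blockP[ey|[j ey]]; subst x y.
- by rewrite eqxx in xy.
- by move=> ax gy; apply: apex_case ax gy.
- by move=> gx ay; apply: apex_case ay gx.
rewrite !group_point_cyclic_block => /eqP ei /eqP ej.
have ij : i != j :> nat by apply: contraNneq xy => /val_inj ->.
have inj2 : (slope s *+ 2 = slope t *+ 2)%R -> slope s = slope t.
  by move=> /(@slope_mulrn_inj s t 2 isT) ->.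
have [cd st] := line_coord2_inj ij (ltn_ord i) (ltn_ord j) inj2 ei ej.
by split=> //; apply: (@slope_mulrn_inj _ _ 1) => //; rewrite st.
Qed.

Lemma cyclic_block_inj s t c d : cyclic_block s c = cyclic_block t d -> s = t /\ c = d.
Proof.
move=> e; apply: (@cyclic_block_pair_uniq s t c d (apex s) (group_point ord0 c)).
- exact: apex_neq_group_point.
- by rewrite apex_cyclic_block.
- by rewrite group_point_cyclic_block /line mulr0n addr0.
- by rewrite -e apex_cyclic_block.
- by rewrite -e group_point_cyclic_block /line mulr0n addr0.
Qed.

Lemma card_cyclic_blocks : #|cyclic_blocks| = 3 * m.
Proof.
rewrite card_imset ?card_prod ?card_ord // => -[s c] [t d] /=.
by case/cyclic_block_inj => -> ->.
Qed.

Lemma cyclic_blocks_packing : is_packing 4 cyclic_blocks.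
Proof.
apply/packingP; split=> [_ /imsetP[[s c] _ ->]|]; first exact: card_cyclic_block.
move=> _ _ x y /imsetP[[s c] _ ->] /imsetP[[t d] _ ->] xy x1 y1 x2 y2.
by have [-> ->] := cyclic_block_pair_uniq xy x1 y1 x2 y2.
Qed.

Lemma cyclic_block_meets_apexes b : b \in cyclic_blocks -> ~~ [disjoint b & apexes].
Proof.
case/imsetP => -[s c] _ ->; rewrite -setI_eq0; apply/set0Pn; exists (apex s).
by rewrite inE apex_cyclic_block eqxx imset_f.
Qed.

(* The blocks through (s, s) for the three slopes s are pairwise disjoint:
   their points in group j are the distinct residues s (j + 1). *)
Definition diagonal_blocks := [set cyclic_block s (slope s) | s : 'I_3].

Lemma diagonal_blocks_ppc : is_ppc cyclic_blocks diagonal_blocks.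
Proof.
apply/ppcP; split.
  by apply/subsetP => _ /imsetP[s _ ->]; apply/imsetP; exists (s, slope s).
move=> _ _ /imsetP[s _ ->] /imsetP[t _ ->] ne.
rewrite -setI_eq0; apply/eqP/setP => y; rewrite inE in_set0.
apply/andP => -[/cyclic_blockP[->|[j ->]]].
  by rewrite apex_cyclic_block => /eqP st; rewrite st eqxx in ne.
have le_j : 0 < j.+1 <= 3 by exact: ltn_ord j.
rewrite group_point_cyclic_block /line -!mulrS => /eqP /(slope_mulrn_inj le_j) st.
by rewrite st eqxx in ne.
Qed.

Lemma card_diagonal_blocks : #|diagonal_blocks| = 3.
Proof. by rewrite card_imset ?card_ord // => s t /cyclic_block_inj[]. Qed.

Lemma cyclic_max_ppc (B : {set {set 'I_v}}) : cyclic_blocks \subset B ->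
  (forall b, b \in B -> ~~ [disjoint b & apexes]) -> max_ppc_size B 3.
Proof.
move=> sB hitB; apply/max_ppc_sizeP; split.
  exists diagonal_blocks; last exact: card_diagonal_blocks.
  exact: ppc_widen sB diagonal_blocks_ppc.
by move=> P pP; rewrite -card_apexes; exact: card_ppc_le_transversal hitB pP.
Qed.

Lemma cyclic_blocks_max_ppc : max_ppc_size cyclic_blocks 3.
Proof. exact: cyclic_max_ppc (subxx _) cyclic_block_meets_apexes. Qed.

Section ExtraBlock.
Hypothesis off_ge4 : 4 <= off.

Fact extra_point_subproof : 3 < v.
Proof. by rewrite v_eq; apply: leq_trans off_ge4 (leq_addr _ _). Qed.
Definition extra_point : 'I_v := Ordinal extra_point_subproof.
Definition extra_block := extra_point |: apexes.
Definition extended_blocks := extra_block |: cyclic_blocks.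

Lemma extra_point_notin_cyclic_block s c : extra_point \notin cyclic_block s c.
Proof.
by apply/cyclic_blockP => -[/(congr1 val)|[j /(congr1 val)]] /=; have := ltn_ord s; lia.
Qed.

Lemma card_extra_block : #|extra_block| = 4.
Proof.
rewrite cardsU1 card_apexes; suff -> : extra_point \notin apexes by [].
by apply/imsetP => -[s _ /(congr1 val)] /=; have := ltn_ord s; lia.
Qed.

Lemma extra_block_cyclic_block x s c :
  x \in extra_block -> x \in cyclic_block s c -> x = apex s.
Proof.
case/setU1P => [->|/imsetP[t _ ->]]; first by rewrite (negPf (extra_point_notin_cyclic_block _ _)).
by rewrite apex_cyclic_block => /eqP ->.
Qed.

Lemma card_extended_blocks : #|extended_blocks| = (3 * m).+1.
Proof.
rewrite cardsU1 card_cyclic_blocks; suff -> : extra_block \notin cyclic_blocks by [].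
apply/imsetP => -[[s c] _ /= e].
by have := extra_point_notin_cyclic_block s c; rewrite -e setU11.
Qed.

Lemma extended_blocks_packing : is_packing 4 extended_blocks.
Proof.
case/packingP: cyclic_blocks_packing => cardB uniqB.
apply/packingP; split=> [b /setU1P[->|/cardB //]|]; first exact: card_extra_block.
have cross b (x y : 'I_v) : b \in cyclic_blocks -> x != y ->
    x \in extra_block -> y \in extra_block -> x \in b -> y \in b -> False.
  case/imsetP=> -[s c] _ -> + xE yE xb yb.
  by rewrite (extra_block_cyclic_block xE xb) (extra_block_cyclic_block yE yb) eqxx.
move=> b1 b2 x y /setU1P[->|h1] /setU1P[->|h2] xy x1 y1 x2 y2 //.
- by case: (cross _ _ _ h2 xy x1 y1 x2 y2).
- by case: (cross _ _ _ h1 xy x2 y2 x1 y1).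
- exact: uniqB _ _ _ _ h1 h2 xy x1 y1 x2 y2.
Qed.

Lemma extended_blocks_max_ppc : max_ppc_size extended_blocks 3.
Proof.
apply: cyclic_max_ppc => [|b /setU1P[->|/cyclic_block_meets_apexes //]].
  exact: subsetUr.
rewrite -setI_eq0; apply/set0Pn; exists (apex ord0).
by rewrite inE setU1r imset_f.
Qed.

End ExtraBlock.
End CyclicConstruction.

Theorem theorem4p3 (v : nat) (hv : 147 <= v) :
  beta 3 v 4 <= v - 2 /\
  (if v %% 3 == 2 then v - 5 <= beta 3 v 4 else v - 3 <= beta 3 v 4).
Proof.
split.
  apply/bigmax_leqP => B /andP[pB /max_ppc_sizeP[_ ppcB]].
  exact: card_packing4_ppc3_le.
pose k := v %/ 3 - 2; pose off := 3 + v %% 3.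
have m_gt6 : 6 < k.+1 by rewrite /k; lia.
have off_ge3 : 3 <= off by [].
have v_eq : v = off + 3 * k.+1 by rewrite /off /k; lia.
case: (leqP 4 off) => [off_ge4|off_lt4].
  have := leq_card_beta (extended_blocks_packing m_gt6 off_ge3 v_eq off_ge4)
                        (extended_blocks_max_ppc m_gt6 off_ge3 v_eq off_ge4).
  rewrite (card_extended_blocks m_gt6 off_ge3 v_eq off_ge4) => le_beta.
  by case: ifP => [/eqP|/negbT/eqP] v_mod; rewrite /off /k in off_ge4 le_beta; lia.
have := leq_card_beta (cyclic_blocks_packing m_gt6 off_ge3 v_eq)
                      (cyclic_blocks_max_ppc m_gt6 off_ge3 v_eq).
rewrite (card_cyclic_blocks m_gt6 off_ge3 v_eq) => le_beta.
by case: ifP => [/eqP|/negbT/eqP] v_mod; rewrite /off /k in off_lt4 le_beta; lia.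
Qed.
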